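(* Let $F(x)=\frac{1-x-\sqrt{1-2x-3x^2}}{2x^2}$ be the generating function of the Motzkin numbers. Then for all $n\in\mathbb{N}$: $D_{2,-1}(n)=1$ if $n\equiv0\pmod 4$, $0$ if $n\equiv1,3\pmod4$, $-1$ if $n\equiv2\pmod4$; $D_{2,-2}(n)=1$ if $n\equiv0,9,10,11\pmod{12}$, $0$ if $n\equiv1,2,7,8\pmod{12}$, $-1$ if $n\equiv3,4,5,6\pmod{12}$. Moreover, for $n\ge4$: $D_{2,-3}(n)=1$ if $n\equiv0,4\pmod{12}$; $0$ if $n\equiv2,8\pmod{12}$; $-1$ if $n\equiv6,10\pmod{12}$; and, writing $k=\lfloor n/12\rfloor$, $D_{2,-3}(12k+1)=8k$, $D_{2,-3}(12k+3)=-8k$, $D_{2,-3}(12k+5)=8k+2$, $D_{2,-3}(12k+7)=-8k-4$, $D_{2,-3}(12k+9)=8k+4$, $D_{2,-3}(12k+11)=-8k-6$.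
   Context: For a power series $F(x)=\sum_{n\ge0}a_nx^n$ and $K\ge1$, write $F(x)^K=\sum_{n\ge0}a_{K,n}x^n$ and set $a_{K,n}=0$ for $n<0$. For $M\in\mathbb{Z}$ and $K,N\in\mathbb{N}$ with $K\ge1$, define the shifted Hankel determinant $D_{K,M}(N)=\det(a_{K,i+j+M})_{i,j=0}^{N-1}$, with $D_{K,M}(0)=1$. $\mathbb{N}=\{0,1,2,\dots\}$. *)

From HB Require Import structures.
From mathcomp Require Import all_boot all_order all_algebra.
Set Implicit Arguments. Unset Strict Implicit. Unset Printing Implicit Defensive.
Import Order.TTheory GRing.Theory Num.Theory.

(* Motzkin numbers M_0, M_1, ... : the coefficients of
   F(x) = (1 - x - sqrt(1-2x-3x^2)) / (2x^2), characterized by the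
   functional equation F = 1 + x F + x^2 F^2, i.e.
   M_0 = 1,  M_{n+1} = M_n + \sum_{k=0}^{n-1} M_k M_{n-1-k}. *)
Definition motzkin_next (s : seq nat) : nat :=
  let n := (size s).-1 in
  nth 0 s n + \sum_(k < n) nth 0 s k * nth 0 s (n.-1 - k).

Fixpoint motzkin_seq (n : nat) : seq nat :=
  match n with
  | 0 => [:: 1]
  | m.+1 => let s := motzkin_seq m in rcons s (motzkin_next s)
  end.

Definition motzkin (n : nat) : nat := nth 0 (motzkin_seq n) n.

(* powcoef K n = a_{K,n}, the coefficient of x^n in F(x)^K *)
Fixpoint powcoef (K n : nat) : nat :=
  match K with
  | 0 => (n == 0)%N : nat
  | K'.+1 => \sum_(i < n.+1) motzkin i * powcoef K' (n - i)
  end.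

Definition acoef (K : nat) (m : int) : int :=
  match m with
  | Posz n => (powcoef K n)%:Z
  | Negz _ => 0
  end.

(* shifted Hankel determinant D_{K,M}(N) = det (a_{K,i+j+M})_{i,j=0}^{N-1};
   for N = 0 this is the determinant of the empty matrix, i.e. 1. *)
Definition hankelD (K : nat) (M : int) (N : nat) : int :=
  \det (\matrix_(i < N, j < N) acoef K ((i + j)%:Z + M)).

(* Let L = (mtri i k) be the lower unitriangular Riordan array (F, x F).  Since
   its rows obey the three-term recurrence L(i+1) = T L(i), with T the symmetric
   tridiagonal all-ones operator, L L^T is the Hankel matrix of the Motzkin numbers
   and L (T - 1) L^T that of a_(2,n) = M_(n+2) - M_(n+1).  Hence the matrix of
   D_(2,-p-1)(n) factors as L B diag(1_p, L^T), where B is the adjacency matrix of a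
   path bordered on the left by the preimages under L of the first p columns: no
   column for p = 0, the 3-periodic vector v2 for p = 1, and v3, v2 for p = 2.
   Column operations along the path reduce det B to sums of the border entries
   weighted by the 4-periodic determinants of paths; these sums are periodic modulo
   12 for v2 and grow linearly in n / 12 for v3. *)

From HB Require Import structures.
From mathcomp Require Import all_boot all_order all_algebra.
From mathcomp Require Import zify ring.
Set Implicit Arguments. Unset Strict Implicit. Unset Printing Implicit Defensive.
Import Order.TTheory GRing.Theory Num.Theory.
Local Open Scope ring_scope.

Local Notation mz n := ((motzkin n)%:Z : int).

Lemma size_motzkin_seq n : size (motzkin_seq n) = n.+1.
Proof. by elim: n => [|n IH] //=; rewrite size_rcons IH. Qed.

Lemma nth_motzkin_seq n k : (k <= n)%N -> nth 0%N (motzkin_seq n) k = motzkin k.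
Proof.
elim: n k => [|n IH] k; first by rewrite leqn0 => /eqP ->.
rewrite leq_eqVlt => /orP[/eqP -> //|lt_kn].
by rewrite /= nth_rcons size_motzkin_seq lt_kn IH.
Qed.

Lemma motzkinS n :
  motzkin n.+1 = (motzkin n + \sum_(k < n) motzkin k * motzkin (n.-1 - k))%N.
Proof.
rewrite {1}/motzkin /= nth_rcons size_motzkin_seq ltnn eqxx /motzkin_next.
rewrite size_motzkin_seq /= nth_motzkin_seq //; congr (_ + _)%N.
apply: eq_bigr => k _; rewrite !nth_motzkin_seq //; last exact: ltnW.
exact: leq_trans (leq_subr _ _) (leq_pred _).
Qed.

Definition motzkin_poly N : {poly int} := \poly_(i < N) mz i.

Lemma coef_motzkin_poly_exp N K n :
  (n < N)%N -> ((motzkin_poly N) ^+ K)`_n = (powcoef K n)%:Z.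
Proof.
elim: K n => [|K IH] n lt_nN; first by rewrite expr0 coef1 /=; case: (n == 0)%N.
rewrite exprS coefM /= -natz natr_sum; apply: eq_bigr => j _.
rewrite natrM natz coef_poly IH; last exact: leq_ltn_trans (leq_subr _ _) lt_nN.
by rewrite (leq_ltn_trans _ lt_nN) ?natz // -ltnS.
Qed.

Lemma coef_motzkin_poly_eq N n : (n < N)%N ->
  (1 + 'X * motzkin_poly N + 'X^2 * (motzkin_poly N) ^+ 2)`_n = mz n.
Proof.
move=> lt_nN; rewrite !coefD coef1 coefXM coefXnM.
case: n lt_nN => [|m] lt_mN /=; first by rewrite !addr0.
rewrite add0r coef_poly (ltn_trans _ lt_mN) // motzkinS PoszD; congr (_ + _).
case: m lt_mN => [|m] lt_mN /=; first by rewrite big_ord0.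
rewrite subn2 /= expr2 coefM -natz natr_sum; apply: eq_bigr => j _.
have lt_jN : (j < N)%N by have := ltn_ord j; lia.
have lt_mjN : (m - j < N)%N by lia.
by rewrite natrM !natz !coef_poly lt_jN lt_mjN.
Qed.

(* Read off the coefficient of x^(m+1) in F^K * F = F^K * (1 + x F + x^2 F^2). *)
Lemma powcoefSS K m : powcoef K.+1 m.+1 =
  (powcoef K m.+1 + powcoef K.+1 m + (if m is m'.+1 then powcoef K.+2 m' else 0))%N.
Proof.
apply/eqP; rewrite -(eqr_nat int) !natrD !natz; apply/eqP.
set P := motzkin_poly m.+2.
have coefF j : (j < m.+2)%N ->
    (P ^+ K * (1 + 'X * P + 'X^2 * P ^+ 2))`_j = (P ^+ K * P)`_j.
  move=> lt_j; rewrite !coefM; apply: eq_bigr => i _; congr (_ * _).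
  rewrite coef_motzkin_poly_eq; last exact: leq_ltn_trans (leq_subr _ _) lt_j.
  by rewrite coef_poly (leq_ltn_trans (leq_subr _ _) lt_j).
have := coefF m.+1 (ltnSn _).
have -> : P ^+ K * (1 + 'X * P + 'X^2 * P ^+ 2) =
    P ^+ K + 'X * P ^+ K.+1 + 'X^2 * P ^+ K.+2 by rewrite !exprS; ring.
rewrite -exprSr !coefD coefXM coefXnM !coef_motzkin_poly_exp; [move=> <- | lia..].
by case: m {coefF P} => [|m] //; rewrite !subSS subn0.
Qed.

Lemma powcoef_at0 K : powcoef K 0 = 1%N.
Proof. by elim: K => [|K IH] //=; rewrite big_ord1 IH. Qed.

Lemma powcoef1 n : powcoef 1 n = motzkin n.
Proof.
apply/eqP; rewrite -(eqr_nat int) !natz -(@coef_motzkin_poly_exp n.+1) //.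
by rewrite expr1 coef_poly ltnSn.
Qed.

Lemma powcoef2 m : (powcoef 2 m)%:Z = mz m.+2 - mz m.+1.
Proof. by rewrite -!powcoef1 (powcoefSS 0 m.+1) add0n PoszD addrAC subrr add0r. Qed.

Lemma acoef_sub K (t s : nat) (z : int) : z = t%:Z - s%:Z ->
  acoef K z = if (s <= t)%N then (powcoef K (t - s))%:Z else 0.
Proof.
move=> ->; case: (leqP s t) => h.
  by have -> : t%:Z - s%:Z = (t - s)%N%:Z by rewrite subzn.
by have -> : t%:Z - s%:Z = Negz (s - t).-1 by rewrite NegzE; lia.
Qed.

(* The Riordan array (F, x F) of the Motzkin numbers: its column k has generating
   function x^k F^(k+1). *)
Definition mtri (i k : nat) : int :=
  if (k <= i)%N then (powcoef k.+1 (i - k))%:Z else 0.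

Lemma mtri_diag i : mtri i i = 1.
Proof. by rewrite /mtri leqnn subnn powcoef_at0. Qed.

Lemma mtri_gt i k : (i < k)%N -> mtri i k = 0.
Proof. by rewrite /mtri ltnNge => /negbTE ->. Qed.

Lemma mtri0 i : mtri i 0 = mz i.
Proof. by rewrite /mtri leq0n subn0 powcoef1. Qed.

Definition tridiag_sum (x : nat -> int) (k : nat) : int :=
  (if k is k'.+1 then x k' else 0) + x k + x k.+1.

Lemma mtriS i k : mtri i.+1 k = tridiag_sum (mtri i) k.
Proof.
rewrite /tridiag_sum; case: (leqP k i) => le_ki.
  have -> : mtri i.+1 k = (powcoef k.+1 (i - k).+1)%:Z.
    by rewrite /mtri (leq_trans le_ki) // subSn.
  rewrite powcoefSS !PoszD /mtri le_ki; congr (_ + _ + _).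
    by case: k le_ki => [|k] le_ki //=; rewrite (ltnW le_ki) subnS prednK // subn_gt0.
  case: (leqP k.+1 i) => h; last by rewrite (_ : i - k = 0)%N //; lia.
  by rewrite (_ : i - k = (i - k.+1).+1)%N //; lia.
rewrite leq_eqVlt in le_ki; case/orP: le_ki => [/eqP <-|lt_ik].
  by rewrite mtri_diag; case: i => [|i] /=; rewrite mtri_diag !mtri_gt // ?add0r ?addr0.
rewrite !mtri_gt //; try lia.
by case: k lt_ik => [|k] lt_ik //=; rewrite mtri_gt ?addr0 //; lia.
Qed.

Definition mtri_row (i : nat) (x : nat -> int) : int := \sum_(k < i.+1) mtri i k * x k.

Lemma mtri_row_widen i n (x : nat -> int) :
  (i < n)%N -> \sum_(k < n) mtri i k * x k = mtri_row i x.
Proof.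
move=> lt_in; rewrite /mtri_row -!(big_mkord xpredT (fun k => mtri i k * x k)).
rewrite (@big_cat_nat _ _ _ i.+1) //= [X in _ + X]big1_seq ?addr0 //.
by move=> k /andP[_]; rewrite mem_index_iota => /andP[lt_ik _]; rewrite mtri_gt ?mul0r.
Qed.

Lemma eq_mtri_row i {x y : nat -> int} : x =1 y -> mtri_row i x = mtri_row i y.
Proof. by move=> exy; apply: eq_bigr => k _; rewrite exy. Qed.

Lemma mtri_rowB i (x y : nat -> int) :
  mtri_row i (fun k => x k - y k) = mtri_row i x - mtri_row i y.
Proof. by rewrite /mtri_row -sumrB; apply: eq_bigr => k _; rewrite mulrBr. Qed.

(* The tridiagonal operator is symmetric, so it can be moved from the rows of
   [mtri] onto the vector. *)
Lemma mtri_rowS i (x : nat -> int) : mtri_row i.+1 x = mtri_row i (tridiag_sum x).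
Proof.
rewrite -(@mtri_row_widen i i.+2) // /mtri_row.
under eq_bigr do rewrite mtriS /tridiag_sum !mulrDl.
under [in RHS]eq_bigr do rewrite !mulrDr.
rewrite !big_split /=.
have -> : \sum_(k < i.+2) (if (k : nat) is k'.+1 then mtri i k' else 0) * x k =
          \sum_(k < i.+2) mtri i k * x k.+1.
  rewrite big_ord_recl /= mul0r add0r [RHS]big_ord_recr /= mtri_gt // mul0r addr0.
  exact: eq_bigr.
have -> : \sum_(k < i.+2) mtri i k.+1 * x k =
          \sum_(k < i.+2) mtri i k * (if (k : nat) is k'.+1 then x k' else 0).
  rewrite [LHS]big_ord_recr /= mtri_gt // mul0r addr0.
  rewrite [RHS]big_ord_recl /= mulr0 add0r; exact: eq_bigr.
ring.
Qed.

Lemma mtri_row_delta i p : mtri_row i (fun k => (k == p)%:R) = mtri i p.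
Proof.
rewrite -(@mtri_row_widen i (i + p).+1); last lia.
have lt_p : (p < (i + p).+1)%N by lia.
rewrite (bigD1 (Ordinal lt_p)) //= eqxx mulr1 big1 ?addr0 // => k ne_kp.
by rewrite -val_eqE /= in ne_kp; rewrite (negbTE ne_kp) mulr0.
Qed.

Lemma mtri_row_mtri i j : mtri_row i (mtri j) = mz (i + j).
Proof.
elim: i j => [|i IH] j; first by rewrite /mtri_row big_ord1 mtri_diag mul1r mtri0.
by rewrite mtri_rowS (@eq_mtri_row _ _ (mtri j.+1)) ?IH ?addnS // => k; rewrite mtriS.
Qed.

Definition v2 (k : nat) : int :=
  if k == 0%N then 0 else if (k %% 3 == 0)%N then -1
  else if (k %% 3 == 1)%N then 0 else 1.

Definition v3 (k : nat) : int := (k %/ 3)%:Z * (if (k %% 3 == 1)%N then -2 else 1).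

Lemma tridiag_sum_v2 k : tridiag_sum v2 k = (k == 1%N)%:R.
Proof. by rewrite /tridiag_sum /v2; case: k => [|[|k]] //=; repeat case: ifP => ?; lia. Qed.

Lemma tridiag_sum_v3 k : tridiag_sum v3 k = v2 k.
Proof.
by rewrite /tridiag_sum /v3 /v2; case: k => [|k] //=; repeat case: ifP => ?; lia.
Qed.

Lemma mtri_row_v2 i : mtri_row i v2 = acoef 2 (i%:Z - 2%:Z).
Proof.
rewrite (@acoef_sub _ i 2 _ erefl).
case: i => [|i]; first by rewrite /mtri_row big_ord1 mulr0.
rewrite mtri_rowS (eq_mtri_row _ tridiag_sum_v2) mtri_row_delta /mtri.
by case: i => [|i].
Qed.

Lemma mtri_row_v3 i : mtri_row i v3 = acoef 2 (i%:Z - 3%:Z).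
Proof.
rewrite (@acoef_sub _ i 3 _ erefl).
case: i => [|i]; first by rewrite /mtri_row big_ord1 mulr0.
rewrite mtri_rowS (eq_mtri_row _ tridiag_sum_v3) mtri_row_v2 (@acoef_sub _ i 2 _ erefl).
by rewrite subSS.
Qed.

Lemma bump_lt h i : (i < h)%N -> bump h i = i.
Proof. by move=> lt_ih; rewrite /bump leqNgt lt_ih. Qed.

Section FunctionDeterminants.
Variable R : comPzRingType.
Implicit Types (f g : nat -> nat -> R) (n : nat).

Definition detf f n : R := \det (\matrix_(i < n, j < n) f i j).

Lemma eq_detf f g n :
  (forall i j, (i < n)%N -> (j < n)%N -> f i j = g i j) -> detf f n = detf g n.
Proof. by move=> efg; congr (\det _); apply/matrixP => i j; rewrite !mxE efg. Qed.

Lemma detf_tr f n : detf f n = detf (fun i j => f j i) n.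
Proof. by rewrite /detf -det_tr; congr (\det _); apply/matrixP => i j; rewrite !mxE. Qed.

Lemma detf_expand_col f n r c : (r <= n)%N -> (c <= n)%N ->
    (forall i, (i <= n)%N -> i != r -> f i c = 0) ->
  detf f n.+1 = f r c * (-1) ^+ (r + c) * detf (fun a b => f (bump r a) (bump c b)) n.
Proof.
move=> le_rn le_cn col0.
rewrite /detf (expand_det_col _ (Ordinal (le_cn : (c < n.+1)%N))).
rewrite (bigD1 (Ordinal (le_rn : (r < n.+1)%N))) //= big1 ?addr0.
  rewrite mxE /cofactor /= mulrA; congr (_ * \det _).
  by apply/matrixP => a b; rewrite !mxE.
by move=> i ne_ir; rewrite mxE col0 ?mul0r // -ltnS.
Qed.

Lemma detf_expand_row f n r c : (r <= n)%N -> (c <= n)%N ->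
    (forall j, (j <= n)%N -> j != c -> f r j = 0) ->
  detf f n.+1 = f r c * (-1) ^+ (r + c) * detf (fun a b => f (bump r a) (bump c b)) n.
Proof.
move=> le_rn le_cn row0; rewrite detf_tr (@detf_expand_col _ n c r) // addnC.
by rewrite detf_tr.
Qed.

Lemma detf_add_col f n j0 k (c : R) : (j0 < n)%N -> (k < n)%N -> j0 != k ->
  detf f n = detf (fun i j => if j == j0 then f i j0 + c * f i k else f i j) n.
Proof.
move=> lt_j0 lt_k ne_j0k; rewrite [LHS]detf_tr [RHS]detf_tr /detf.
set A := \matrix_(i < n, j < n) (if (i == j0 :> nat) then f j j0 + c * f j k else f j i).
set B := \matrix_(i < n, j < n) f j i.
set C := \matrix_(i < n, j < n) (if (i == j0 :> nat) then f j k else f j i).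
have -> : \det A = 1 * \det B + c * \det C.
  apply: (determinant_multilinear (i0 := Ordinal lt_j0)).
  - by apply/matrixP => i j; rewrite !mxE /= eqxx mul1r.
  - by apply/matrixP => i j; rewrite !mxE /= eq_sym (negbTE (neq_bump _ _)).
  - by apply/matrixP => i j; rewrite !mxE /= eq_sym (negbTE (neq_bump _ _)).
have -> : \det C = 0.
  apply: (determinant_alternate (i1 := Ordinal lt_j0) (i2 := Ordinal lt_k)) => // j.
  by rewrite !mxE /= eqxx eq_sym (negbTE ne_j0k).
by rewrite mul1r mulr0 addr0.
Qed.

Lemma detf1 f : detf f 1 = f 0%N 0%N.
Proof. by rewrite /detf det_mx11 mxE. Qed.

Lemma detf2 f : detf f 2 = f 0%N 0%N * f 1%N 1%N - f 0%N 1%N * f 1%N 0%N.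
Proof.
rewrite /detf (expand_det_col _ ord0) big_ord_recl big_ord1 /cofactor !mxE /=.
by rewrite !det_mx11 !mxE /= expr0 expr1; ring.
Qed.

End FunctionDeterminants.

Ltac case_ifs :=
  repeat first [ progress rewrite ?eqxx /=
               | match goal with |- context [if ?b then _ else _] =>
                   let h := fresh "h" in case h : b end ].

Section BorderedPath.
Variable R : comPzRingType.
Implicit Types (w a b : nat -> R) (c d : R).

Definition path_adj (k l : nat) : R := (k == l.+1)%:R + (l == k.+1)%:R.

Lemma path_adjE k l :
  path_adj k l = (if k == l.+1 then 1 else 0) + (if l == k.+1 then 1 else 0).
Proof. by rewrite /path_adj; case: eqP; case: eqP. Qed.

Lemma path_adjSn k : path_adj k.+1 k = 1.
Proof. by rewrite path_adjE eqxx (_ : k == k.+2 = false) ?addr0 //; lia. Qed.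

Definition path_sign (n : nat) : R :=
  if (n %% 4 == 0)%N then 1 else if (n %% 4 == 2)%N then -1 else 0.

Lemma path_signSS n : path_sign n.+2 = - path_sign n.
Proof. by rewrite /path_sign; case_ifs; first [ring | exfalso; lia]. Qed.

Lemma sign_addnn n : (-1) ^+ (n + n) = 1 :> R.
Proof. by rewrite -signr_odd addnn odd_double. Qed.

Lemma sign_addnS n : (-1) ^+ (n + n.+1) = -1 :> R.
Proof. by rewrite addnS exprS sign_addnn mulr1. Qed.

Lemma detf_path_adjSS m : detf path_adj m.+2 = - detf path_adj m.
Proof.
rewrite (@detf_expand_col _ path_adj m.+1 m m.+1) //; last first.
  by move=> i le_im ne_im; rewrite path_adjE; case_ifs; first [ring | exfalso; lia].
rewrite sign_addnS path_adjE; case_ifs; try lia.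
rewrite (detf_expand_row (r := m) (c := m)) //; last first.
  by move=> j le_jm ne_jm; rewrite !path_adjE /bump; case_ifs; first [ring | exfalso; lia].
rewrite sign_addnn !path_adjE /bump; case_ifs; try lia.
rewrite add0r addr0 !mul1r mulN1r; congr (- _); apply: eq_detf => i j lt_im lt_jm.
by rewrite !path_adjE /bump; case_ifs; first [ring | exfalso; lia].
Qed.

Lemma detf_path_adj n : detf path_adj n = path_sign n.
Proof.
elim: n {-2}n (leqnn n) => [|n IH] [|[|k]] // le_kn.
- by rewrite /detf det_mx00.
- by rewrite /detf det_mx00.
- by rewrite detf1 path_adjE /= addr0.
- by rewrite detf_path_adjSS path_signSS IH // ltnW.
Qed.

Definition path_sum w (m : nat) : R := \sum_(i < m) path_sign i * w i.

Lemma path_sumS w m : path_sum w m.+1 = path_sum w m + path_sign m * w m.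
Proof. by rewrite /path_sum big_ord_recr. Qed.

(* The border column after subtracting [w N] times the last path column, whose
   ones sit in rows [N - 2] and [N]. *)
Definition border_elim w (N i : nat) : R := w i - (if i.+2 == N then w N else 0).

Lemma path_sum_border_elim w N :
  (0 < N)%N -> path_sum (border_elim w N) N = path_sum w N.+1.
Proof.
case: N => [|[|k]] // _.
  by rewrite !path_sumS /path_sum !big_ord0 /border_elim /path_sign /=; ring.
rewrite !path_sumS path_signSS /border_elim eqxx (_ : k.+3 == k.+2 = false); last lia.
have -> : path_sum (border_elim w k.+2) k = path_sum w k.
  apply: eq_bigr => i _; rewrite /border_elim (_ : i.+2 == k.+2 = false) ?subr0 //.
  by have := ltn_ord i; lia.
ring.
Qed.

Definition bordered_path (p : nat) (W : nat -> nat -> R) (k l : nat) : R :=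
  if (l < p)%N then W l k else path_adj k (l - p).

Lemma detf_bordered_path1S w n : (0 < n)%N ->
  detf (bordered_path 1 (fun=> w)) n.+1 = detf (bordered_path 1 (fun=> border_elim w n)) n.
Proof.
move=> n_gt0.
rewrite (@detf_add_col _ _ n.+1 0 n (- w n)) //; last by rewrite eq_sym -lt0n.
rewrite (detf_expand_row (r := n) (c := n)) //; last first.
  move=> j le_jn ne_jn; rewrite /bordered_path !path_adjE.
  by case_ifs; first [ring | exfalso; lia].
rewrite sign_addnn /bordered_path; case_ifs; try lia.
rewrite -{1}(subnK n_gt0) addn1 path_adjSn mulr1 mul1r; apply: eq_detf => i j lt_in lt_jn.
rewrite !bump_lt // /border_elim !path_adjE; case_ifs; first [ring | exfalso; lia].
Qed.

Lemma detf_bordered_path1 w n :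
  detf (bordered_path 1 (fun=> w)) n.+1 = path_sum w n.+1.
Proof.
elim: n w => [|n IH] w.
  by rewrite detf1 /bordered_path path_sumS /path_sum big_ord0 /path_sign /=; ring.
by rewrite detf_bordered_path1S // IH path_sum_border_elim.
Qed.

Definition bordered_path2 a b c d (m i j : nat) : R :=
  if i == m then (if j == 0%N then c else if j == 1%N then d else 0)
  else bordered_path 2 (fun l => if l == 0%N then a else b) i j.

Lemma detf_bordered_path2S a b c d m : (0 < m)%N ->
  detf (bordered_path2 a b c d m.+1) m.+2 =
  - detf (bordered_path2 (border_elim a m) (border_elim b m) c d m) m.+1.
Proof.
move=> m_gt0.
have adj_m : path_adj m (m.+1 - 2) = 1.
  by case: m m_gt0 => [|m] // _; rewrite subSS subn1 path_adjSn.
rewrite (@detf_add_col _ _ m.+2 0 m.+1 (- a m)) //.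
rewrite (@detf_add_col _ _ m.+2 1 m.+1 (- b m)) //; last by rewrite eqSS eq_sym -lt0n.
rewrite (detf_expand_row (r := m) (c := m.+1)) //; last first.
  move=> j le_jm ne_jm; rewrite /bordered_path2 /bordered_path !path_adjE.
  by case_ifs; first [ring | exfalso; lia].
rewrite sign_addnS /bordered_path2 /bordered_path; case_ifs; try lia.
rewrite adj_m mul1r mulN1r; congr (- _); apply: eq_detf => i j lt_im lt_jm.
rewrite [bump m.+1 j]bump_lt //; have [->|ne_im] := eqVneq i m.
  rewrite /bump leqnn /border_elim /bordered_path2 /bordered_path !path_adjE.
  by case_ifs; first [ring | exfalso; lia].
rewrite bump_lt; last by rewrite ltn_neqAle ne_im -ltnS.
rewrite /border_elim /bordered_path2 /bordered_path !path_adjE.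
by case_ifs; first [ring | exfalso; lia].
Qed.

Lemma detf_bordered_path2 a b c d m :
  detf (bordered_path2 a b c d m.+1) m.+2 =
  (-1) ^+ m * (path_sum a m.+1 * d - path_sum b m.+1 * c).
Proof.
elim: m a b => [|m IH] a b.
  rewrite detf2 /bordered_path2 /bordered_path !path_sumS /path_sum !big_ord0.
  by rewrite /path_sign path_adjE /=; ring.
by rewrite detf_bordered_path2S // IH !path_sum_border_elim // exprS; ring.
Qed.

End BorderedPath.

Arguments path_adj {R} k l.
Arguments path_sign {R} n.

Lemma sum_ord_delta (R : pzSemiRingType) n p (f : nat -> R) :
  \sum_(l < n) (l == p :> nat)%:R * f l = if (p < n)%N then f p else 0.
Proof.
case: ifP => lt_pn.
  rewrite (bigD1 (Ordinal lt_pn)) //= eqxx mul1r big1 ?addr0 // => k ne_kp.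
  by rewrite -val_eqE /= in ne_kp; rewrite (negbTE ne_kp) mul0r.
rewrite big1 // => k _; case: eqP => [e_kp|]; last by rewrite mul0r.
by move: (ltn_ord k); rewrite e_kp lt_pn.
Qed.

Lemma path_adj_mul_mtri n j k : (j < n)%N ->
  \sum_(l < n) path_adj k l * mtri j l = tridiag_sum (mtri j) k - mtri j k.
Proof.
move=> lt_jn; rewrite /path_adj /tridiag_sum.
under eq_bigr do rewrite mulrDl.
rewrite big_split /=.
have -> : \sum_(l < n) (l == k.+1 :> nat)%:R * mtri j l = mtri j k.+1.
  by rewrite sum_ord_delta; case: ifP => // h; rewrite mtri_gt //; lia.
case: k => [|k].
  by rewrite big1 ?add0r => [|l _]; [ring | rewrite mul0r].
rewrite (eq_bigr (fun l : 'I_n => (l == k :> nat)%:R * mtri j l)); last first.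
  by move=> l _; rewrite eqSS eq_sym.
by rewrite sum_ord_delta; case: ifP => h; [ring | rewrite (@mtri_gt j k); [ring | lia]].
Qed.

Definition blk_mtri_tr (p l j : nat) : int :=
  if (l < p)%N || (j < p)%N then (l == j)%:R else mtri (j - p) (l - p).

Lemma bordered_path_mul n p W (k j : 'I_n) :
  (\matrix_(a < n, b < n) bordered_path p W a b *m
   \matrix_(a < n, b < n) blk_mtri_tr p a b) k j =
  if (j < p)%N then W j k else tridiag_sum (mtri (j - p)) k - mtri (j - p) k.
Proof.
rewrite !mxE; case: ifP => lt_jp.
  under eq_bigr do rewrite !mxE /blk_mtri_tr lt_jp orbT mulrC.
  by rewrite sum_ord_delta ltn_ord /bordered_path lt_jp.
have le_pj : (p <= j)%N by rewrite leqNgt lt_jp.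
have le_pn : (p <= n)%N by apply: leq_trans le_pj (ltnW (ltn_ord j)).
under eq_bigr do rewrite !mxE.
rewrite -(big_mkord xpredT (fun l => bordered_path p W k l * blk_mtri_tr p l j)).
rewrite (@big_cat_nat _ _ _ p) //= big1_seq ?add0r; last first.
  move=> l /andP[_]; rewrite mem_index_iota => /andP[_ lt_lp].
  rewrite /blk_mtri_tr lt_lp /=; case: eqP => [e_lj|]; last by rewrite mulr0.
  by move: lt_lp; rewrite e_lj lt_jp.
rewrite -{1}(add0n p) big_addn big_mkord.
rewrite -(@path_adj_mul_mtri (n - p) (j - p) k); last by have := ltn_ord j; lia.
apply: eq_bigr => l _.
by rewrite /bordered_path /blk_mtri_tr lt_jp (_ : (l + p < p)%N = false) ?addnK //; lia.
Qed.

Lemma acoef2_pred (t : nat) (z : int) : z = t%:Z - 1 -> acoef 2 z = mz t.+1 - mz t.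
Proof.
move=> ->; case: t => [|t]; first by rewrite motzkinS big_ord0 addn0 subrr.
by rewrite (_ : t.+1%:Z - 1 = t%:Z) /= ?powcoef2 //; lia.
Qed.

Lemma det_mtri n : \det (\matrix_(i < n, k < n) mtri i k) = 1.
Proof.
rewrite det_trig; last first.
  by apply/forallP => i; apply/forallP => j; apply/implyP => lt_ij; rewrite mxE mtri_gt.
by rewrite big1 // => i _; rewrite mxE mtri_diag.
Qed.

Lemma det_blk_mtri_tr n p : \det (\matrix_(a < n, b < n) blk_mtri_tr p a b) = 1.
Proof.
rewrite -det_tr det_trig; last first.
  apply/forallP => i; apply/forallP => j; apply/implyP => lt_ij.
  rewrite !mxE /blk_mtri_tr; case: ifP => h; first by rewrite (gtn_eqF lt_ij).
  by rewrite mtri_gt //; move: h lt_ij; lia.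
by rewrite big1 // => i _; rewrite !mxE /blk_mtri_tr eqxx; case: ifP; rewrite ?mtri_diag.
Qed.

Lemma hankel2_shift_factor p (W : nat -> nat -> int) n :
    (forall i j, (j < p)%N -> acoef 2 ((i + j)%:Z - (p.+1)%:Z) = mtri_row i (W j)) ->
  \matrix_(i < n, j < n) acoef 2 ((i + j)%:Z + - (p.+1)%:Z) =
  \matrix_(i < n, k < n) mtri i k *m
    (\matrix_(a < n, b < n) bordered_path p W a b *m
     \matrix_(a < n, b < n) blk_mtri_tr p a b).
Proof.
move=> colW; apply/matrixP => i j; rewrite !mxE.
under [RHS]eq_bigr do rewrite mxE bordered_path_mul.
case: (ltnP j p) => [lt_jp|le_pj]; first by rewrite mtri_row_widen // colW.
rewrite (@mtri_row_widen _ _ (fun k => tridiag_sum (mtri (j - p)) k - mtri (j - p) k)) //.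
rewrite mtri_rowB -mtri_rowS !mtri_row_mtri addSn; apply: acoef2_pred; lia.
Qed.

Lemma hankelD2_bordered_path p (W : nat -> nat -> int) n :
    (forall i j, (j < p)%N -> acoef 2 ((i + j)%:Z - (p.+1)%:Z) = mtri_row i (W j)) ->
  hankelD 2 (- (p.+1)%:Z) n = detf (bordered_path p W) n.
Proof.
move=> colW; rewrite /hankelD (hankel2_shift_factor _ colW) !det_mulmx.
by rewrite det_mtri det_blk_mtri_tr mul1r mulr1.
Qed.

Lemma hankelD2_m1 n : hankelD 2 (-1) n = detf path_adj n.
Proof.
rewrite (@hankelD2_bordered_path 0 (fun _ _ => 0)) //.
by apply: eq_detf => i j _ _; rewrite /bordered_path subn0.
Qed.

Lemma hankelD2_m2 n : hankelD 2 (-2) n.+1 = path_sum v2 n.+1.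
Proof.
rewrite (@hankelD2_bordered_path 1 (fun=> v2)) ?detf_bordered_path1 // => i j.
by rewrite ltnS leqn0 => /eqP ->; rewrite addn0 mtri_row_v2.
Qed.

Lemma hankelD2_m3 m : hankelD 2 (-3) m.+2 =
  (-1) ^+ m * (path_sum v3 m.+1 * v2 m.+1 - path_sum v2 m.+1 * v3 m.+1).
Proof.
set W := fun j : nat => if j == 0%N then v3 else v2.
rewrite (@hankelD2_bordered_path 2 W) => [|i [|[|j]] //= _]; last first.
- by rewrite mtri_row_v2 (_ : (i + 1)%:Z - 3%:Z = i%:Z - 2%:Z) //; lia.
- by rewrite mtri_row_v3 addn0.
rewrite -detf_bordered_path2; apply: eq_detf => i j lt_i lt_j.
rewrite /bordered_path2 /bordered_path /W; have [->|//] := eqVneq i m.+1.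
by case: j lt_j => [|[|j]] //= lt_j; rewrite path_adjE; case_ifs; lia.
Qed.

Lemma path_sum_v2 m : path_sum v2 m.+1 =
  if (m %% 12 < 2)%N then 0 else if (m %% 12 < 6)%N then -1
  else if (m %% 12 < 8)%N then 0 else 1.
Proof.
elim: m => [|m IH]; rewrite path_sumS ?IH /path_sign /v2; last by case_ifs; lia.
by rewrite /path_sum big_ord0; case_ifs; lia.
Qed.

Lemma path_sum_v3 m : path_sum v3 m.+1 =
  let q := (m %/ 12)%:Z in
  if (m %% 12 < 2)%N then 8 * q else if (m %% 12 < 4)%N then 4 * q
  else if (m %% 12 < 6)%N then - (4 * q) - 2 else if (m %% 12 < 8)%N then - (8 * q) - 4
  else if (m %% 12 < 10)%N then - (4 * q) - 2 else 4 * q + 4.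
Proof.
elim: m => [|m IH]; rewrite path_sumS ?IH /path_sign /v3; last by case_ifs; lia.
by rewrite /path_sum big_ord0; case_ifs; lia.
Qed.

Theorem proposition4p3 :
  (forall n : nat,
     ((n %% 4 = 0)%N -> hankelD 2 (-1) n = 1) /\
     ((n %% 4 = 1)%N \/ (n %% 4 = 3)%N -> hankelD 2 (-1) n = 0) /\
     ((n %% 4 = 2)%N -> hankelD 2 (-1) n = -1)) /\
  (forall n : nat,
     ((n %% 12 = 0)%N \/ (n %% 12 = 9)%N \/ (n %% 12 = 10)%N \/ (n %% 12 = 11)%N ->
        hankelD 2 (-2) n = 1) /\
     ((n %% 12 = 1)%N \/ (n %% 12 = 2)%N \/ (n %% 12 = 7)%N \/ (n %% 12 = 8)%N ->
        hankelD 2 (-2) n = 0) /\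
     ((n %% 12 = 3)%N \/ (n %% 12 = 4)%N \/ (n %% 12 = 5)%N \/ (n %% 12 = 6)%N ->
        hankelD 2 (-2) n = -1)) /\
  (forall n : nat, (4 <= n)%N ->
     let k : int := (n %/ 12)%:Z in
     ((n %% 12 = 0)%N \/ (n %% 12 = 4)%N -> hankelD 2 (-3) n = 1) /\
     ((n %% 12 = 2)%N \/ (n %% 12 = 8)%N -> hankelD 2 (-3) n = 0) /\
     ((n %% 12 = 6)%N \/ (n %% 12 = 10)%N -> hankelD 2 (-3) n = -1) /\
     ((n %% 12 = 1)%N -> hankelD 2 (-3) n = 8 * k) /\
     ((n %% 12 = 3)%N -> hankelD 2 (-3) n = - (8 * k)) /\
     ((n %% 12 = 5)%N -> hankelD 2 (-3) n = 8 * k + 2) /\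
     ((n %% 12 = 7)%N -> hankelD 2 (-3) n = - (8 * k) - 4) /\
     ((n %% 12 = 9)%N -> hankelD 2 (-3) n = 8 * k + 4) /\
     ((n %% 12 = 11)%N -> hankelD 2 (-3) n = - (8 * k) - 6)).
Proof.
split; [|split].
- move=> n; rewrite hankelD2_m1 detf_path_adj /path_sign.
  by split; [|split] => h; case_ifs; lia.
- case=> [|m]; first by rewrite /hankelD det_mx00; split; [|split] => h; lia.
  rewrite hankelD2_m2 path_sum_v2.
  by split; [|split] => h; case_ifs; lia.
- case=> [|[|m]] // _ k; rewrite {}/k hankelD2_m3 path_sum_v3 path_sum_v2 /v2 /v3.
  rewrite -signr_odd; case: (odd m) / idP => odd_m; rewrite /= ?expr0 ?expr1.
  all: by repeat split => h; case_ifs; lia.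
Qed.
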